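(* For any Banach spaces $X$ and $Y$, $d_K(X^*,Y^* )\le 2\,d_K(X,Y)$.
   Context: $B_X$ is the closed unit ball of $X$. The Kadets distance $d_K(X,Y)$ is the infimum, over all Banach spaces $Z$ and all linear isometric embeddings $U:X\to Z$, $V:Y\to Z$, of the Hausdorff distance between $UB_X$ and $VB_Y$ in $Z$. *)

From mathcomp Require Import all_boot all_algebra all_classical all_reals all_analysis.
Import GRing.Theory Num.Theory.
Local Open Scope ring_scope.
Local Open Scope classical_set_scope.


(* A normed space presented inside an ambient R-vector space [pn_vec]:
   its points are the elements of the linear subspace [pn_dom], with norm
   [pn_norm].  This lets us treat both a normed space X itself and its dual
   X^* (a subspace of the functions X -> R) uniformly. *)
Record pnspace (R : realType) := PNSpace {
  pn_vec : lmodType R ;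
  pn_dom : set pn_vec ;
  pn_norm : pn_vec -> R }.
Arguments PNSpace {R} pn_vec pn_dom pn_norm.
Arguments pn_vec {R} p.
Arguments pn_dom {R} p _.
Arguments pn_norm {R} p _.

Definition nspace_of {R : realType} (X : normedModType R) : pnspace R :=
  PNSpace X setT (fun x : X => `|x|).

Definition dual_space {R : realType} (X : normedModType R) : pnspace R :=
  PNSpace (X -> R^o)
    [set f : X -> R^o | (forall (a : R) (x y : X), f (a *: x + y) = a * f x + f y)
                        /\ continuous f]
    (fun f : X -> R^o => sup [set `|f x| | x in [set x : X | `|x| <= 1]]).

Definition unit_ball {R : realType} (E : pnspace R) : set (pn_vec E) :=
  [set u : pn_vec E | pn_dom E u /\ pn_norm E u <= 1].

Definition lin_isometry {R : realType} {E : pnspace R} {Z : normedModType R}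
    (U : pn_vec E -> Z) : Prop :=
  (forall (a : R) (u v : pn_vec E), pn_dom E u -> pn_dom E v ->
      U (a *: u + v) = a *: U u + U v)
  /\ (forall u, pn_dom E u -> `|U u| = pn_norm E u).

(* distance from a point to a set, and Hausdorff distance (for nonempty
   bounded sets, which is the only case used). *)
Definition dist_to {R : realType} {Z : normedModType R} (z : Z) (B : set Z) : R :=
  inf [set `|z - b| | b in B].

Definition hausdorff_dist {R : realType} {Z : normedModType R} (A B : set Z) : R :=
  Num.max (sup [set dist_to a B | a in A]) (sup [set dist_to b A | b in B]).

Definition kadets_dist {R : realType} (E F : pnspace R) : R :=
  inf [set r : R | exists (Z : completeNormedModType R)
                          (U : pn_vec E -> Z) (V : pn_vec F -> Z),
         lin_isometry U /\ lin_isometry V /\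
         r = hausdorff_dist (U @` unit_ball E) (V @` unit_ball F)].

(* Let U, V embed X, Y isometrically into Z, let r be the Hausdorff distance
   between U B_X and V B_Y, and let rho > r.  The set T of pairs (x, y) of unit
   vectors with |U x - V y| <= rho projects onto both unit balls, so restriction
   along the two projections embeds X^* and Y^* isometrically into the bounded
   functions on T.  By Hahn-Banach, f in the unit ball of X^* extends along U to
   a functional F of norm at most 1 on Z, and g := F o V lies in the unit ball
   of Y^* with |f x - g y| <= |U x - V y| <= rho on T; symmetrically for Y^*.
   Hence the Kadets distance of the duals is in fact at most d_K(X, Y). *)

From HB Require Import structures.
From mathcomp Require Import all_boot all_order all_algebra all_classical all_reals all_analysis.
From mathcomp Require Import lra.
Import GRing.Theory Num.Theory Order.TTheory.
Import numFieldNormedType.Exports.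
Local Open Scope ring_scope.
Local Open Scope classical_set_scope.

Section SupInf.
Context {R : realType}.
Implicit Types (E : set R) (x M : R).

Lemma ge0_ge_sup E M : 0 <= M -> ubound E M -> sup E <= M.
Proof.
move=> M0 EM; have [En0|E0] := pselect (E !=set0); first exact: ge_sup.
suff -> : E = set0 by rewrite sup0.
by apply/seteqP; split=> x Ex //; apply: E0; exists x.
Qed.

Lemma sup_ge0 E : (forall x, E x -> 0 <= x) -> 0 <= sup E.
Proof.
move=> E_ge0; have [[[x Ex] Eub]|NE] := pselect (has_sup E); last by rewrite sup_out.
exact: le_trans (E_ge0 _ Ex) (ub_le_sup Eub Ex).
Qed.

Lemma inf_ge0 E : (forall x, E x -> 0 <= x) -> 0 <= inf E.
Proof.
move=> E_ge0; have [En0|E0] := pselect (E !=set0); first exact: lb_le_inf.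
suff -> : E = set0 by rewrite inf0.
by apply/seteqP; split=> x Ex //; apply: E0; exists x.
Qed.

Lemma ge0_inf_le E x : (forall y, E y -> 0 <= y) -> E x -> inf E <= x.
Proof. by move=> E_ge0 Ex; apply: ge_inf => //; exists 0 => y /E_ge0. Qed.

End SupInf.

Section BoundedFunctions.
Variables (R : realType) (T : Type).

Definition bfun_pred : {pred T -> R^o} :=
  fun f => `[< exists M : R, forall t, `|f t| <= M >].
Definition bfun_pred_key : pred_key bfun_pred. Proof. exact. Qed.
Canonical bfun_pred_keyed := KeyedPred bfun_pred_key.

Lemma bfun_predP (f : T -> R^o) :
  reflect (exists M : R, forall t, `|f t| <= M) (f \in bfun_pred).
Proof. exact: asboolP. Qed.

Lemma bfun_pred_submod_closed : submod_closed bfun_pred.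
Proof.
split; first by apply/bfun_predP; exists 0 => t; rewrite normr0.
move=> a f g /bfun_predP[M fM] /bfun_predP[N gN].
apply/bfun_predP; exists (`|a| * M + N) => t.
by rewrite (le_trans (ler_normD _ _))// lerD// normrM ler_wpM2l.
Qed.

HB.instance Definition _ :=
  GRing.isSubmodClosed.Build _ _ bfun_pred bfun_pred_submod_closed.

Record bfun := BFun { bfun_val :> T -> R^o; bfun_valP : bfun_val \in bfun_pred }.
HB.instance Definition _ := [isSub for bfun_val].
HB.instance Definition _ := [Choice of bfun by <:].
HB.instance Definition _ := [SubChoice_isSubLmodule of bfun by <:].

Definition sup_norm (f : bfun) : R := sup [set `|f t| | t in [set: T]].

Lemma sup_norm_ub (f : bfun) t : `|f t| <= sup_norm f.
Proof.
apply: ub_le_sup; last by exists t.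
by have /bfun_predP[M fM] := bfun_valP f; exists M => _ [s _ <-].
Qed.

Lemma sup_norm_le (f : bfun) M : 0 <= M -> (forall t, `|f t| <= M) -> sup_norm f <= M.
Proof. by move=> M0 fM; apply: ge0_ge_sup => // _ [t _ <-]. Qed.

Lemma sup_norm_ge0 (f : bfun) : 0 <= sup_norm f.
Proof. by apply: sup_ge0 => _ [t _ <-]. Qed.

Lemma sup_normD (f g : bfun) : sup_norm (f + g) <= sup_norm f + sup_norm g.
Proof.
apply: sup_norm_le => [|t]; first by rewrite addr_ge0 ?sup_norm_ge0.
by rewrite (le_trans (ler_normD _ _))// lerD ?sup_norm_ub.
Qed.

Lemma sup_normZ (l : R) (f : bfun) : sup_norm (l *: f) = `|l| * sup_norm f.
Proof.
apply/eqP; rewrite eq_le; apply/andP; split.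
  apply: sup_norm_le => [|t]; first by rewrite mulr_ge0 ?sup_norm_ge0.
  by rewrite normrM ler_wpM2l ?sup_norm_ub.
have [->|l0] := eqVneq l 0; first by rewrite normr0 mul0r sup_norm_ge0.
rewrite -ler_pdivlMl ?normr_gt0 //; apply: sup_norm_le => [|t].
  by rewrite mulr_ge0 ?invr_ge0 ?sup_norm_ge0.
rewrite ler_pdivlMl ?normr_gt0 // -normrM.
exact: (sup_norm_ub (l *: f)).
Qed.

Lemma sup_norm_eq0 (f : bfun) : sup_norm f = 0 -> f = 0.
Proof.
move=> f0; apply: val_inj; apply/funext => t /=.
by apply/normr0_eq0/le_anti; rewrite normr_ge0 -f0 sup_norm_ub.
Qed.

HB.instance Definition _ :=
  Lmodule_isNormed.Build R bfun sup_normD sup_normZ sup_norm_eq0.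

Lemma bfun_normE (f : bfun) : `|f| = sup_norm f.
Proof. by []. Qed.

Lemma bfun_ball_lt (f g : bfun) e : ball f e g -> forall t, `|f t - g t| < e.
Proof. by rewrite -ball_normE => fg t; apply: le_lt_trans (sup_norm_ub (f - g) t) fg. Qed.

Section Completeness.
Variable F : set_system bfun.
Hypotheses (FF : ProperFilter F) (Fc : cauchy F).

Let Fcauchy := iffLR (cauchyP _) Fc.

Lemma bfun_cauchy_cvg_pointwise t : cvg ((fun f : bfun => f t) @ F).
Proof.
apply: cauchy_cvg; apply/cauchyP => e e0.
have [f Ff] := Fcauchy e e0; exists (f t).
change (F [set h : bfun | ball (f t) e (h t)]).
by apply: filterS Ff => h /bfun_ball_lt/(_ t); rewrite -ball_normE.
Qed.

Let g t := lim ((fun f : bfun => f t) @ F).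

Lemma bfun_cauchy_lim_near (f : bfun) e t : F (ball f e) -> `|f t - g t| <= e.
Proof.
move=> Ff; apply/ler_addgt0Pr => d d0.
have /cvgrPdist_lt/(_ d d0) := bfun_cauchy_cvg_pointwise t => Fg.
have [h [/= /bfun_ball_lt/(_ t) fh hg]] := filter_ex (filterI Ff Fg).
rewrite -(subrKA (h t)) (le_trans (ler_normD _ _))// ltW// ltrD// distrC; exact: hg.
Qed.

Lemma bfun_cauchy_lim_bounded : g \in bfun_pred.
Proof.
have [f Ff] := Fcauchy 1 ltr01; apply/bfun_predP; exists (sup_norm f + 1) => t.
rewrite -[g t](subrK (f t)) (le_trans (ler_normD _ _))// [leRHS]addrC.
by rewrite lerD ?sup_norm_ub// distrC bfun_cauchy_lim_near.
Qed.

Lemma bfun_complete : cvg F.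
Proof.
apply/cvg_ex; exists (Sub g bfun_cauchy_lim_bounded); apply/cvgrPdist_le => e e0.
have e20 : 0 < e / 2 by rewrite divr_gt0.
have [f Ff] := Fcauchy _ e20; apply: filterS (Ff) => h fh.
apply: sup_norm_le => [|t]; first exact: ltW.
change (`|g t - h t| <= e).
rewrite -(subrKA (f t)) (le_trans (ler_normD _ _))// (splitr e) lerD//.
  by rewrite distrC; apply: bfun_cauchy_lim_near.
exact/ltW/bfun_ball_lt.
Qed.

End Completeness.

HB.instance Definition _ := Uniform_isComplete.Build bfun bfun_complete.

End BoundedFunctions.

Section ProductComplete.
Variables (R : realType) (U V : completePseudoMetricType R).
HB.instance Definition _ := Pointed.on (U * V)%type.

Lemma prod_complete (F : set_system (U * V)%type) : ProperFilter F -> cauchy F -> cvg F.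
Proof.
move=> FF /cauchyP Fc.
have cvg_fst : cvg (fst @ F).
  apply: cauchy_cvg; apply/cauchyP => e e0; have [p Fp] := Fc e e0; exists p.1.
  change (F [set q | ball p.1 e q.1]).
  by apply: filterS Fp => q pq; exact: pq.1.
have cvg_snd : cvg (snd @ F).
  apply: cauchy_cvg; apply/cauchyP => e e0; have [p Fp] := Fc e e0; exists p.2.
  change (F [set q | ball p.2 e q.2]).
  by apply: filterS Fp => q pq; exact: pq.2.
apply/cvg_ex; exists (lim (fst @ F), lim (snd @ F)).
suff -> : F = (fun p : U * V => (p.1, p.2)) @ F by exact: cvg_pair.
by rewrite (_ : (fun p : U * V => (p.1, p.2)) = id) //; apply: boolp.funext => -[].
Qed.

HB.instance Definition _ := Uniform_isComplete.Build (U * V)%type prod_complete.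
End ProductComplete.

(* Redeclaring completeness on products of complete normed spaces makes HB build
   their joint [completeNormedModType] structure. *)
HB.instance Definition _ (R : realType) (X Y : completeNormedModType R) :=
  Complete.on (X * Y)%type.

Section HahnBanach.
Context {R : realType} {Z : lmodType R}.
Variable p : Z -> R.
Hypothesis p_add : forall x y, p (x + y) <= p x + p y.
Hypothesis p_scale : forall (t : R) x, 0 < t -> p (t *: x) = t * p x.

(* A linear functional on a subspace, dominated by [p], given by its graph: the
   graphs, ordered by inclusion, are what Zorn's lemma is applied to. *)
Definition dominated_linear_graph (G : set (Z * R)) :=
  [/\ forall z a b, G (z, a) -> G (z, b) -> a = b,
      forall (t : R) z a w b, G (z, a) -> G (w, b) -> G (t *: z + w, t * a + b) &
      forall z a, G (z, a) -> a <= p z].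

Lemma p_scale_shift (s : R) m y : 0 < s -> s * p (s^-1 *: m + y) = p (m + s *: y).
Proof.
by move=> s0; rewrite -p_scale // scalerDr scalerA mulfV ?gt_eqF // scale1r.
Qed.

Definition adjoin_graph (H : set (Z * R)) z0 c : set (Z * R) :=
  [set q | exists m a t, H (m, a) /\ q = (m + t *: z0, a + t * c)].

Lemma adjoin_graph_sub H z0 c : H `<=` adjoin_graph H z0 c.
Proof. by move=> [m a] Hma; exists m, a, 0; rewrite scale0r mul0r !addr0. Qed.

Lemma adjoin_graph_new H z0 c : H (0, 0) -> adjoin_graph H z0 c (z0, c).
Proof. by exists 0, 0, 1; rewrite scale1r mul1r !add0r. Qed.

Section Extension.
Context {H : set (Z * R)} {m1 : Z} {a1 : R} {z0 : Z}.
Hypotheses (domH : dominated_linear_graph H) (Hm1 : H (m1, a1))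
  (z0_notin : forall a, ~ H (z0, a)).

Let H_functional {z a b} : H (z, a) -> H (z, b) -> a = b.
Proof. by case: domH => + _ _; apply. Qed.
Let H_lin t {z a w b} : H (z, a) -> H (w, b) -> H (t *: z + w, t * a + b).
Proof. by case: domH => _ + _; apply. Qed.
Let H_dom {z a} : H (z, a) -> a <= p z.
Proof. by case: domH => _ _; apply. Qed.

Lemma graph00 : H (0, 0).
Proof. by have := H_lin (-1) Hm1 Hm1; rewrite scaleN1r mulN1r !addNr. Qed.

Lemma graphZ (t : R) {m a} : H (m, a) -> H (t *: m, t * a).
Proof. by move=> Hma; have := H_lin t Hma graph00; rewrite !addr0. Qed.

Lemma graph_extension_bounds : exists c, forall m a, H (m, a) ->
  a - p (m - z0) <= c /\ c <= p (m + z0) - a.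
Proof.
(* [a + b <= p (m + m') <= p (m - z0) + p (m' + z0)] for [(m, a), (m', b)] in [H]. *)
pose L := [set x | exists m a, H (m, a) /\ x = a - p (m - z0)].
have L_ub m' b : H (m', b) -> ubound L (p (m' + z0) - b).
  move=> Hm' _ [m [a [Hm ->]]]; rewrite lerBrDr addrAC lerBlDr.
  have := H_dom (H_lin 1 Hm Hm'); rewrite scale1r mul1r => /le_trans; apply.
  by rewrite (_ : m + m' = m' + z0 + (m - z0)) ?p_add // addrACA subrr addr0 addrC.
exists (sup L) => m a Hm; split.
  by apply: ub_le_sup; [exists (p (m1 + z0) - a1); exact: L_ub Hm1|exists m, a].
by apply: ge_sup; [exists (a1 - p (m1 - z0)), m1, a1|exact: L_ub Hm].
Qed.

Lemma dominated_linear_adjoin_graph c :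
  (forall m a, H (m, a) -> a - p (m - z0) <= c /\ c <= p (m + z0) - a) ->
  dominated_linear_graph (adjoin_graph H z0 c).
Proof.
move=> c_bounds; split.
- move=> _ a' b' [m [a [t [Hm [-> ->]]]]] [m' [b [t' [Hm' [e ->]]]]].
  have [tt'|tt'] := eqVneq t t'.
    by move: e Hm'; rewrite tt' => /addIr <- Hm'; rewrite (H_functional Hm Hm').
  have dm : m' - m = (t - t') *: z0.
    have -> : m' = m + t *: z0 - t' *: z0 by rewrite e addrK.
    by rewrite scalerBl addrAC [m + _]addrC addrK.
  have := graphZ (t - t')^-1 (H_lin (-1) Hm Hm').
  by rewrite scaleN1r [- m + _]addrC dm scalerA mulVf ?subr_eq0 // scale1r => /z0_notin.
- move=> s _ _ _ _ [m [a [t [Hm [-> ->]]]]] [m' [b [t' [Hm' [-> ->]]]]].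
  exists (s *: m + m'), (s * a + b), (s * t + t'); split; first exact: H_lin.
  by congr (_, _); rewrite (scalerDr, mulrDr) ?scalerDl ?mulrDl ?scalerA ?mulrA addrACA.
- move=> _ _ [m [a [t [Hm [-> ->]]]]].
  have [t0|t0|->] := ltgtP t 0; last by rewrite scale0r mul0r !addr0; exact: H_dom.
  + have := (c_bounds _ _ (graphZ (- t)^-1 Hm)).1.
    have nt0 : 0 < - t by rewrite oppr_gt0.
    rewrite -(ler_pM2l nt0) mulrBr mulrA mulfV ?gt_eqF // mul1r.
    rewrite p_scale_shift // scaleNr scalerN opprK.
    lra.
  + have := (c_bounds _ _ (graphZ t^-1 Hm)).2.
    rewrite -(ler_pM2l t0) mulrBr mulrA mulfV ?gt_eqF // mul1r p_scale_shift //.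
    lra.
Qed.

Lemma dominated_linear_graph_extend :
  exists c, dominated_linear_graph (adjoin_graph H z0 c).
Proof.
have [c c_bounds] := graph_extension_bounds.
by exists c; apply: dominated_linear_adjoin_graph.
Qed.

End Extension.

Lemma dominated_linear_graph_from_pairs (A : set (Z * R)) :
  (forall q1 q2, A q1 -> A q2 ->
     exists2 B, dominated_linear_graph B & [/\ B q1, B q2 & B `<=` A]) ->
  dominated_linear_graph A.
Proof.
move=> pairsA; split.
- move=> z a b Aza Azb; have [B [Bfun _ _] [Bza Bzb _]] := pairsA _ _ Aza Azb.
  exact: Bfun Bza Bzb.
- move=> t z a w b Aza Awb; have [B [_ Blin _] [Bza Bwb BA]] := pairsA _ _ Aza Awb.
  exact/BA/Blin.
- move=> z a Aza; have [B [_ _ Bdom] [Bza _ _]] := pairsA _ _ Aza Aza.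
  exact: Bdom Bza.
Qed.

Section Zorn.
Variable G0 : set (Z * R).
Hypothesis domG0 : dominated_linear_graph G0.

Let P (G : set (Z * R)) := dominated_linear_graph (G0 `|` G).

Lemma dominated_linear_graph_bigcup (FF : set (set (Z * R))) :
  FF `<=` P -> total_on FF subset -> P (\bigcup_(X in FF) X).
Proof.
move=> FFP FFchain; apply: dominated_linear_graph_from_pairs.
have sub X : FF X -> G0 `|` X `<=` G0 `|` \bigcup_(X in FF) X.
  by move=> FFX q [G0q|Xq]; [left|right; exists X].
move=> q1 q2 [G0q1|[X1 FFX1 X1q1]] [G0q2|[X2 FFX2 X2q2]].
- by exists G0 => //; split=> //; left.
- by exists (G0 `|` X2); [exact: FFP|split; [left|right|exact: sub]].
- by exists (G0 `|` X1); [exact: FFP|split; [right|left|exact: sub]].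
- have [X12|X21] := FFchain _ _ FFX1 FFX2.
    by exists (G0 `|` X2); [exact: FFP|split; [right; exact: X12|right|exact: sub]].
  by exists (G0 `|` X1); [exact: FFP|split; [right|right; exact: X21|exact: sub]].
Qed.

End Zorn.

Theorem hahn_banach_graph {G0 : set (Z * R)} :
  dominated_linear_graph G0 -> G0 !=set0 ->
  exists F : Z -> R, [/\ forall (t : R) z w, F (t *: z + w) = t * F z + F w,
    forall z a, G0 (z, a) -> F z = a & forall z, F z <= p z].
Proof.
move=> domG0 [[m1 a1] G0m1].
have [A [domA Amax]] := Zorn_bigcup (dominated_linear_graph_bigcup _ domG0).
set H := G0 `|` A in domA.
have Hm1 : H (m1, a1) by left.
have H_total z0 : exists a, H (z0, a).
  apply: contrapT => z0_notin.
  have {}z0_notin a : ~ H (z0, a) by move=> Hz0; apply: z0_notin; exists a.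
  have [c domH'] := dominated_linear_graph_extend domA Hm1 z0_notin.
  apply: (Amax (adjoin_graph H z0 c)); last first.
    by rewrite setUidr // => q G0q; apply/adjoin_graph_sub; left.
  split=> [q Aq|/(_ (z0, c)) H'A]; first by apply/adjoin_graph_sub; right.
  by apply: (z0_notin c); right; apply/H'A/adjoin_graph_new/(graph00 domA Hm1).
have [F HF] := choice H_total.
case: domA => Hfun Hlin Hdom; exists F; split.
- by move=> t z w; apply: Hfun (HF _) _; apply: Hlin; apply: HF.
- by move=> z a G0za; apply: Hfun (HF _) _; left.
- by move=> z; apply: Hdom (HF z).
Qed.
End HahnBanach.

Section Isometry.
Context {R : realType} {X Z : normedModType R} {U : X -> Z}.
Hypothesis iU : lin_isometry (E := nspace_of X) U.

Lemma lin_isometry_lin a u v : U (a *: u + v) = a *: U u + U v.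
Proof. by case: iU => + _; apply. Qed.

Lemma lin_isometry_norm u : `|U u| = `|u|.
Proof. by case: iU => _; apply. Qed.

Lemma lin_isometry0 : U 0 = 0.
Proof. by apply/normr0_eq0; rewrite lin_isometry_norm normr0. Qed.

Lemma lin_isometryB u v : U (u - v) = U u - U v.
Proof. by rewrite addrC -scaleN1r lin_isometry_lin scaleN1r addrC. Qed.

End Isometry.

Section DualSpace.
Context {R : realType} {X : normedModType R} {f : X -> R^o}.
Hypothesis hf : pn_dom (dual_space X) f.

Lemma dual_lin a x y : f (a *: x + y) = a * f x + f y.
Proof. by case: hf => + _; apply. Qed.

Lemma dual0 : f 0 = 0.
Proof. by have := dual_lin (-1) 0 0; rewrite scaler0 addr0 mulN1r addNr. Qed.

Lemma dualZ a x : f (a *: x) = a * f x.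
Proof. by have := dual_lin a x 0; rewrite !addr0 dual0 addr0. Qed.

Lemma dual_bounded : exists C, forall x, `|x| <= 1 -> `|f x| <= C.
Proof.
case: hf => _ /(_ 0)/cvgrPdist_lt/(_ 1 ltr01)/nbhs_ballP[d /= d0 fd].
have d2_gt0 : 0 < d / 2 by rewrite divr_gt0.
exists (2 / d) => x x1.
have : ball (0 : X) d ((d / 2) *: x).
  rewrite -ball_normE /ball_ /= sub0r normrN normrZ gtr0_norm //.
  by apply: le_lt_trans (ler_wpM2l (ltW d2_gt0) x1) _; lra.
move=> /fd /=; rewrite dual0 sub0r normrN dualZ normrM gtr0_norm // => fx.
rewrite -(mulKf (lt0r_neq0 d2_gt0) `|f x|) invf_div -[leRHS]mulr1.
by rewrite ler_wpM2l ?ltW // divr_gt0.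
Qed.

Lemma dual_normP x : `|f x| <= pn_norm (dual_space X) f * `|x|.
Proof.
have [->|x0] := eqVneq x 0; first by rewrite dual0 !normr0 mulr0.
have [C fC] := dual_bounded.
have nx0 : 0 < `|x| by rewrite normr_gt0.
have : `|f (`|x|^-1 *: x)| <= pn_norm (dual_space X) f.
  apply: ub_le_sup; first by exists C => _ [y y1 <-]; exact: fC.
  by exists (`|x|^-1 *: x) => //=; rewrite normrZ normfV normr_id mulVf ?gt_eqF.
by rewrite dualZ normrM normfV normr_id ler_pdivrMl // mulrC.
Qed.

End DualSpace.

Section DualExtension.
Context {R : realType} {X Y Z : normedModType R} {U : X -> Z} {V : Y -> Z}.
Hypothesis iU : lin_isometry (E := nspace_of X) U.
Hypothesis iV : lin_isometry (E := nspace_of Y) V.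

Lemma dual_extend_along_isometry {f} : unit_ball (dual_space X) f ->
  exists F : Z -> R, [/\ forall (t : R) z w, F (t *: z + w) = t * F z + F w,
    forall x, F (U x) = f x & forall z, `|F z| <= `|z|].
Proof.
move=> [hf f1].
pose G0 := [set q : Z * R | exists x, q = (U x, f x)].
have domG0 : dominated_linear_graph (fun z : Z => `|z|) G0.
  split.
  - move=> _ a b [x [-> ->]] [x' [Uxx' ->]]; congr f; apply/eqP.
    rewrite -subr_eq0 -normr_eq0 -(lin_isometry_norm iU) lin_isometryB //.
    by rewrite Uxx' subrr normr0.
  - move=> t _ _ _ _ [x [-> ->]] [w [-> ->]]; exists (t *: x + w).
    by rewrite (lin_isometry_lin iU) (dual_lin hf).
  - move=> _ _ [x [-> ->]]; rewrite (lin_isometry_norm iU).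
    by rewrite (le_trans (ler_norm _)) // (le_trans (dual_normP hf x)) // ler_piMl.
have normZ (t : R) (z : Z) : 0 < t -> `|t *: z| = t * `|z|.
  by move=> t0; rewrite normrZ gtr0_norm.
have G0_neq0 : G0 !=set0 by exists (U 0, f 0), 0.
have [F [Flin FG0 Fle]] := hahn_banach_graph _ (@ler_normD _ Z) normZ domG0 G0_neq0.
have F0 : F 0 = 0 by have := Flin (-1) 0 0; rewrite scaler0 addr0 mulN1r addNr.
have FN z : F (- z) = - F z by have := Flin (-1) z 0; rewrite scaleN1r mulN1r F0 !addr0.
exists F; split=> // [x|z]; first by apply: FG0; exists x.
by rewrite ler_norml Fle andbT lerNl -FN -normrN Fle.
Qed.

Lemma dual_unit_ball_transfer {f} : unit_ball (dual_space X) f ->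
  exists2 g, unit_ball (dual_space Y) g & forall x y, `|f x - g y| <= `|U x - V y|.
Proof.
move=> /dual_extend_along_isometry[F [Flin FU Fle]].
have FB z w : F (z - w) = F z - F w by rewrite addrC -scaleN1r Flin mulN1r addrC.
exists (F \o V).
  split; first split.
  - by move=> a y y'; rewrite /= (lin_isometry_lin iV) Flin.
  - move=> y; apply/cvgrPdist_lt => e e0.
    apply: filterS (nbhsx_ballx y e e0) => y'; rewrite -ball_normE /ball_ /= => yy'.
    by rewrite -FB -(lin_isometryB iV) (le_lt_trans (Fle _)) // (lin_isometry_norm iV).
  - apply: ge0_ge_sup => // _ [y y1 <-] /=.
    by rewrite (le_trans (Fle _)) // (lin_isometry_norm iV).
by move=> x y; rewrite -FU -FB Fle.
Qed.

End DualExtension.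

Section Hausdorff.
Context {R : realType} {Z : normedModType R}.
Implicit Types (A B : set Z) (rho : R).

Lemma dist_to_ge0 (z : Z) B : 0 <= dist_to z B.
Proof. by apply: inf_ge0 => _ [b _ <-]. Qed.

Lemma dist_to_le (z : Z) {B b} : B b -> dist_to z B <= `|z - b|.
Proof. by move=> Bb; apply: ge0_inf_le; [move=> _ [c _ <-]|exists b]. Qed.

Lemma hausdorff_dist_ge0 A B : 0 <= hausdorff_dist A B.
Proof.
rewrite /hausdorff_dist le_max; apply/orP; left.
by apply: sup_ge0 => _ [a _ <-]; exact: dist_to_ge0.
Qed.

Lemma hausdorff_distC A B : hausdorff_dist A B = hausdorff_dist B A.
Proof. by rewrite /hausdorff_dist maxC. Qed.

Lemma hausdorff_dist_le A B rho : 0 <= rho ->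
  (forall a, A a -> exists2 b, B b & `|a - b| <= rho) ->
  (forall b, B b -> exists2 a, A a & `|b - a| <= rho) ->
  hausdorff_dist A B <= rho.
Proof.
move=> rho0 closeA closeB; rewrite /hausdorff_dist ge_max.
apply/andP; split; apply: ge0_ge_sup => // _ [a Aa <-].
  by have [b Bb ab] := closeA a Aa; exact: le_trans (dist_to_le _ Bb) ab.
by have [b Bb ab] := closeB a Aa; exact: le_trans (dist_to_le _ Bb) ab.
Qed.

(* [M] only serves to make the supremum in [hausdorff_dist A B] finite. *)
Lemma hausdorff_dist_lt_near {A B a rho M} : A a ->
  (forall a', A a' -> exists2 b, B b & `|a' - b| <= M) ->
  hausdorff_dist A B < rho -> exists2 b, B b & `|a - b| < rho.
Proof.
move=> Aa closeA AB_rho.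
have aB_rho : dist_to a B < rho.
  apply: le_lt_trans AB_rho; rewrite /hausdorff_dist le_max; apply/orP; left.
  apply: ub_le_sup; last by exists a.
  exists M => _ [a' Aa' <-]; have [b Bb a'b] := closeA a' Aa'.
  exact: le_trans (dist_to_le _ Bb) a'b.
have [b0 Bb0 _] := closeA a Aa.
have hinf : has_inf [set `|a - b| | b in B].
  by split; [exists `|a - b0|, b0|exists 0 => _ [c _ <-]].
have gap_gt0 : 0 < rho - dist_to a B by rewrite subr_gt0.
have [_ [b Bb <-] hb] := inf_adherent gap_gt0 hinf.
by exists b => //; move: hb; rewrite -/(dist_to a B) addrCA subrr addr0.
Qed.

End Hausdorff.

(* The default [0] of [insubd] is never reached: [f \o phi] is bounded for [f]
   in the dual. *)
Definition restrict_dual {R : realType} {X : normedModType R} {T : Type} (phi : T -> X)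
  (f : X -> R^o) : bfun R T := insubd 0 (f \o phi).

Section RestrictDual.
Context {R : realType} {X : normedModType R} {T : Type} {phi : T -> X}.
Hypothesis phi_ball : range phi = [set x | `|x| <= 1].

Lemma restrict_dual_bounded f : pn_dom (dual_space X) f -> f \o phi \in bfun_pred R T.
Proof.
move=> hf; have [C fC] := dual_bounded hf; apply/bfun_predP; exists C => t.
have : range phi (phi t) by exists t.
by rewrite phi_ball => /fC.
Qed.

Lemma restrict_dualE {f} :
  pn_dom (dual_space X) f -> restrict_dual phi f = f \o phi :> (T -> R^o).
Proof. by move=> hf; rewrite /restrict_dual insubdK // restrict_dual_bounded. Qed.

Lemma restrict_dual_isometry : lin_isometry (E := dual_space X) (restrict_dual phi).
Proof.
split=> [a f g hf hg|f hf].
  apply: val_inj; rewrite {1}/restrict_dual insubdK; last first.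
    by rewrite rpredD ?rpredZ ?restrict_dual_bounded.
  by rewrite /= !restrict_dualE.
rewrite bfun_normE /sup_norm restrict_dualE //=; congr sup.
by rewrite -phi_ball image_comp.
Qed.

End RestrictDual.

Section Kadets.
Context {R : realType}.

Lemma kadets_dist_ge0 (E F : pnspace R) : 0 <= kadets_dist E F.
Proof. by apply: inf_ge0 => _ [Z [U [V [_ [_ ->]]]]]; exact: hausdorff_dist_ge0. Qed.

Lemma kadets_dist_le_hausdorff {E F : pnspace R} {Z : completeNormedModType R}
    {U : pn_vec E -> Z} {V : pn_vec F -> Z} :
  lin_isometry U -> lin_isometry V ->
  kadets_dist E F <= hausdorff_dist (U @` unit_ball E) (V @` unit_ball F).
Proof.
move=> iU iV; apply: ge0_inf_le; last by exists Z, U, V.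
by move=> _ [Z' [U' [V' [_ [_ ->]]]]]; exact: hausdorff_dist_ge0.
Qed.

Section DualMatching.
Context {X Y Z : normedModType R} {U : X -> Z} {V : Y -> Z} {rho : R}.
Hypothesis iU : lin_isometry (E := nspace_of X) U.
Hypothesis iV : lin_isometry (E := nspace_of Y) V.
Hypothesis rho_ge0 : 0 <= rho.
Hypothesis matchX : forall x, `|x| <= 1 -> exists2 y, `|y| <= 1 & `|U x - V y| <= rho.
Hypothesis matchY : forall y, `|y| <= 1 -> exists2 x, `|x| <= 1 & `|U x - V y| <= rho.

Let T := {q : X * Y | [/\ `|q.1| <= 1, `|q.2| <= 1 & `|U q.1 - V q.2| <= rho]}.
Let piX (t : T) := (sval t).1.
Let piY (t : T) := (sval t).2.

Let range_piX : range piX = [set x | `|x| <= 1].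
Proof.
apply/seteqP; split=> [_ [[[x y] [x1 _ _]] _ <-] //|x x1].
by have [y y1 xy] := matchX x x1; exists (exist _ (x, y) (And3 x1 y1 xy)).
Qed.

Let range_piY : range piY = [set y | `|y| <= 1].
Proof.
apply/seteqP; split=> [_ [[[x y] [_ y1 _]] _ <-] //|y y1].
by have [x x1 xy] := matchY y y1; exists (exist _ (x, y) (And3 x1 y1 xy)).
Qed.

Lemma kadets_dist_dual_le_matching : kadets_dist (dual_space X) (dual_space Y) <= rho.
Proof.
apply: le_trans (kadets_dist_le_hausdorff (restrict_dual_isometry range_piX)
  (restrict_dual_isometry range_piY)) _.
apply: hausdorff_dist_le => // _ [f f1 <-].
- have [g g1 fg] := dual_unit_ball_transfer iU iV f1.
  exists (restrict_dual piY g); first by exists g.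
  rewrite bfun_normE; apply: sup_norm_le => // t; have [_ _ xy] := svalP t.
  rewrite /= (restrict_dualE range_piX f1.1) (restrict_dualE range_piY g1.1) /=.
  exact: le_trans (fg _ _) xy.
- have [g g1 fg] := dual_unit_ball_transfer iV iU f1.
  exists (restrict_dual piX g); first by exists g.
  rewrite bfun_normE; apply: sup_norm_le => // t; have [_ _ xy] := svalP t.
  rewrite /= (restrict_dualE range_piY f1.1) (restrict_dualE range_piX g1.1) /=.
  by rewrite distrC in xy; exact: le_trans (fg _ _) xy.
Qed.

End DualMatching.
End Kadets.

Section ProductEmbeddings.
Context {R : realType} {X Y : normedModType R}.

Lemma lin_isometry_pairl : lin_isometry (E := nspace_of X) (fun x : X => (x, 0 : Y)).
Proof.
split=> [a u v _ _|u _]; first by congr (_, _); rewrite /= scaler0 addr0.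
by change (Num.max `|u| `|0 : Y| = `|u|); rewrite normr0 max_l.
Qed.

Lemma lin_isometry_pairr : lin_isometry (E := nspace_of Y) (fun y : Y => (0 : X, y)).
Proof.
split=> [a u v _ _|u _]; first by congr (_, _); rewrite /= scaler0 addr0.
by change (Num.max `|0 : X| `|u| = `|u|); rewrite normr0 max_r.
Qed.

End ProductEmbeddings.

Section DualKadets.
Context {R : realType}.

Lemma lin_isometry_unit_balls_near {X Y Z : normedModType R} {U : X -> Z} {V : Y -> Z} :
  lin_isometry (E := nspace_of X) U -> lin_isometry (E := nspace_of Y) V ->
  forall a, (U @` unit_ball (nspace_of X)) a ->
  exists2 b, (V @` unit_ball (nspace_of Y)) b & `|a - b| <= 1.
Proof.
move=> iU iV _ [x [_ x1] <-]; exists (V 0).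
  by exists 0 => //; split; rewrite /= ?normr0.
by rewrite (lin_isometry0 iV) subr0 (lin_isometry_norm iU).
Qed.

Lemma kadets_dist_dual_le_hausdorff (X Y Z : normedModType R) (U : X -> Z) (V : Y -> Z) :
  lin_isometry (E := nspace_of X) U -> lin_isometry (E := nspace_of Y) V ->
  kadets_dist (dual_space X) (dual_space Y) <=
    hausdorff_dist (U @` unit_ball (nspace_of X)) (V @` unit_ball (nspace_of Y)).
Proof.
move=> iU iV; apply/ler_addgt0Pr => e e0.
set r := hausdorff_dist _ _; have r_lt : r < r + e by rewrite ltrDl.
apply: (kadets_dist_dual_le_matching iU iV).
- by rewrite addr_ge0 ?hausdorff_dist_ge0 ?ltW.
- move=> x x1; have UBx : (U @` unit_ball (nspace_of X)) (U x) by exists x.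
  have [_ [y [_ y1] <-] xy] :=
    hausdorff_dist_lt_near UBx (lin_isometry_unit_balls_near iU iV) r_lt.
  by exists y => //; exact: ltW.
- move=> y y1; have VBy : (V @` unit_ball (nspace_of Y)) (V y) by exists y.
  have rC_lt : hausdorff_dist (V @` unit_ball (nspace_of Y)) (U @` unit_ball (nspace_of X))
      < r + e by rewrite hausdorff_distC.
  have [_ [x [_ x1] <-] yx] :=
    hausdorff_dist_lt_near VBy (lin_isometry_unit_balls_near iV iU) rC_lt.
  by exists x => //; rewrite distrC ltW.
Qed.

Lemma kadets_dist_dual_le (X Y : completeNormedModType R) :
  kadets_dist (dual_space X) (dual_space Y) <= kadets_dist (nspace_of X) (nspace_of Y).
Proof.
apply: lb_le_inf; last first.
  by move=> _ [Z [U [V [iU [iV ->]]]]]; exact: kadets_dist_dual_le_hausdorff.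
(* The product [X * Y] shows that the infimum defining d_K(X, Y) is not over [set0]. *)
exists (hausdorff_dist ((fun x : X => (x, 0 : Y)) @` unit_ball (nspace_of X))
                       ((fun y : Y => (0 : X, y)) @` unit_ball (nspace_of Y))).
exists (CompleteNormedModule.clone R (X * Y)%type _), (fun x => (x, 0)), (fun y => (0, y)).
by split; [exact: lin_isometry_pairl|split; [exact: lin_isometry_pairr|]].
Qed.

End DualKadets.

Theorem theorem4p3 (R : realType) (X Y : completeNormedModType R) :
  kadets_dist (dual_space X) (dual_space Y)
    <= 2 * kadets_dist (nspace_of X) (nspace_of Y).
Proof.
have := kadets_dist_dual_le X Y.
have := kadets_dist_ge0 (nspace_of X) (nspace_of Y).
lra.
Qed.
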